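(* Let $(H_i)_{i=0}^\infty = (2^{\alpha_i}3^{\beta_i})_{i=0}^\infty$ be the increasing enumeration of $\mathcal{H}=\{2^\alpha3^\beta : \alpha,\beta\in\mathbb{N}_0\}$, and define $f\colon\mathbb{N}_0\to\{+1,-1\}$ by $f(0)=+1$ and $f(n)=(-1)^{\alpha_i+\beta_i}$ for $n\in\{H_i,H_i+1,\dots,H_{i+1}-1\}$, $i\in\mathbb{N}_0$. Then $f$ is asymptotically $2$-automatic and asymptotically $3$-automatic.
   Context: $\mathbb{N}_0=\{0,1,2,\dots\}$. A property holds for almost all $n\in\mathbb{N}_0$ if the set of $n$ where it fails has upper density $\limsup_{N\to\infty}|\cdot\cap\{0,\dots,N-1\}|/N$ equal to $0$. Sequences $f,g$ are asymptotically equal, $f\simeq g$, if $f(n)=g(n)$ for almost all $n$. The $k$-kernel of $f$ is $\mathcal{N}_k(f) = \{ n \mapsto f(k^\alpha n + r) : \alpha, r \in \mathbb{N}_0,\ r < k^\alpha\}$; $f$ is asymptotically $k$-automatic if $\mathcal{N}_k(f)/{\simeq}$ is finite. *)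

From mathcomp Require Import all_boot all_algebra.
Set Implicit Arguments. Unset Strict Implicit. Unset Printing Implicit Defensive.
Import GRing.Theory Num.Theory.

(* Upper density of the set {n | P n} is 0:
   limsup_N #{n < N | P n}/N = 0, i.e. for every eps = 1/(k+1) > 0,
   eventually #{n < N | P n} <= eps * N. *)
Definition upper_density_zero (P : pred nat) : Prop :=
  forall k : nat, exists N0 : nat, forall N : nat, N0 <= N ->
    k.+1 * count P (iota 0 N) <= N.

Definition asym_eq (f g : nat -> int) : Prop :=
  upper_density_zero (fun n => f n != g n).

Definition in_kernel (k : nat) (f g : nat -> int) : Prop :=
  exists alpha r : nat, r < k ^ alpha /\ g = (fun n => f (k ^ alpha * n + r)).

Definition asym_automatic (k : nat) (f : nat -> int) : Prop :=
  exists (m : nat) (L : nat -> nat -> int),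
    (forall i, i < m -> in_kernel k f (L i)) /\
    (forall g, in_kernel k f g -> exists2 i, i < m & asym_eq g (L i)).

(* H_i <= n < H_{i+1} where H_i = 2^a 3^b, written without the enumeration:
   2^a 3^b <= n and every element of {2^x 3^y} larger than 2^a 3^b exceeds n. *)
Definition in_block (a b n : nat) : Prop :=
  2 ^ a * 3 ^ b <= n /\
  forall x y : nat, 2 ^ a * 3 ^ b < 2 ^ x * 3 ^ y -> n < 2 ^ x * 3 ^ y.

(* Let {p, s} = {2, 3}, let H be the set of numbers p^c s^d, and let [h, h^+) be the
   block of H containing n.  For r < p^a the number p^a n + r lies in the block starting at
   p^a h, so that f (p^a n + r) = (-1)^a f n, unless some p^c s^d with c < a lies between
   p^a h and p^a n + r.  As log 2 / log 3 is irrational, consecutive elements of H have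
   ratio tending to 1 (a pigeonhole argument), so such an n lies within relative distance
   1/K of p^(c-a) s^d for some c < a and some d.  For fixed c these windows meet [0, N) in
   O(N/K) points in total (a geometric sum over d), so the exceptions have density zero.
   Hence the p-kernel of f consists, up to asymptotic equality, of f and -f. *)

From mathcomp Require Import all_boot all_algebra.
From mathcomp Require Import zify.
From Stdlib Require Import Classical.
Import GRing.Theory Num.Theory.
Set Implicit Arguments. Unset Strict Implicit. Unset Printing Implicit Defensive.

Lemma count_union_bound (T : eqType) (I : finType) (P : pred T) (Q : I -> pred T) (s : seq T) :
  {in s, forall x, P x -> exists i, Q i x} -> count P s <= \sum_i count (Q i) s.
Proof.
elim: s => [|x s IHs] cover /=; first by rewrite big1.
rewrite big_split /= leq_add //; last by apply: IHs => y ys; apply: cover; rewrite inE ys orbT.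
case Px: (P x) => //; have [i Qix] := cover x (mem_head x s) Px.
by rewrite (bigD1 i) //= Qix.
Qed.

Lemma count_predU_le (T : Type) (a1 a2 : pred T) s :
  count (predU a1 a2) s <= count a1 s + count a2 s.
Proof. by rewrite -count_predUI leq_addr. Qed.

Lemma count_iota_interval (P : pred nat) N lo hi :
  (forall n, n < N -> P n -> lo <= n < hi) -> count P (iota 0 N) <= hi - lo.
Proof.
move=> inP; rewrite -size_filter -[hi - lo](size_iota lo).
apply: uniq_leq_size => [|n]; first by rewrite filter_uniq // iota_uniq.
rewrite mem_filter !mem_iota add0n => /andP[Pn /andP[_ ltnN]].
by rewrite subnKC; [exact: inP | have := inP n ltnN Pn; lia].
Qed.

Lemma count_scaled_interval (P : pred nat) N q lo hi : 0 < q ->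
  (forall n, n < N -> P n -> lo < q * n.+1 /\ q * n < hi) ->
  q * count P (iota 0 N) <= hi - lo + 2 * q.
Proof.
move=> q_gt0 inP.
have /(leq_mul (leqnn q)) : count P (iota 0 N) <= (hi %/ q).+1 - lo %/ q.
  apply: count_iota_interval => n ltnN Pn; have [lo_lt lt_hi] := inP n ltnN Pn.
  by rewrite -ltnS ltn_divLR // ltnS leq_divRL //; lia.
have := divn_eq lo q; have := divn_eq hi q.
have := ltn_pmod lo q_gt0; have := ltn_pmod hi q_gt0.
rewrite (mulnC (lo %/ q)) (mulnC (hi %/ q)); nia.
Qed.

Lemma upper_density_zero_sub (P Q : pred nat) :
  subpred P Q -> upper_density_zero Q -> upper_density_zero P.
Proof.
move=> sPQ densQ k; have [N0 leQ] := densQ k; exists N0 => N /leQ.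
by apply: leq_trans; rewrite leq_mul2l sub_count.
Qed.

Lemma upper_density_zeroU (P Q : pred nat) :
  upper_density_zero P -> upper_density_zero Q -> upper_density_zero (predU P Q).
Proof.
move=> densP densQ k.
have [N1 leP] := densP (2 * k).+1; have [N2 leQ] := densQ (2 * k).+1.
exists (maxn N1 N2) => N; rewrite geq_max => /andP[/leP le1 /leQ le2].
have := count_predU_le P Q (iota 0 N); nia.
Qed.

Lemma exists_crossing (P : pred nat) m :
  P 0 -> ~~ P m -> exists j, [/\ j < m, P j & ~~ P j.+1].
Proof.
elim: m => [P0|m IHm P0 notPm1]; first by rewrite P0.
case Pm: (P m); first by exists m.
by have [j [lt_jm Pj notPj1]] := IHm P0 (negbT Pm); exists j; split; first exact: ltnW.
Qed.

Lemma sum_geometric_below c s Y D : 1 < s ->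
  \sum_(d < D) (if c * s ^ d < Y then c * s ^ d else 0) <= 2 * Y.
Proof.
move=> s_gt1.
suff [] : \sum_(d < D) (if c * s ^ d < Y then c * s ^ d else 0) <= 2 * Y /\
          \sum_(d < D) (if c * s ^ d < Y then c * s ^ d else 0) + c <= c * s ^ D by [].
elim: D => [|D [IH1 IH2]]; first by rewrite big_ord0 expn0 muln1.
have double : 2 * (c * s ^ D) <= c * s ^ D.+1.
  by rewrite expnS mulnCA leq_mul2l leq_mul2r s_gt1 !orbT.
rewrite big_ord_recr /=.
move: (\sum_(d < D) _) (c * s ^ D) (c * s ^ D.+1) IH1 IH2 double => S x y.
case: ifP; lia.
Qed.

Lemma bernoulli_nat v J : v ^ J * (v + J) <= (v + 1) ^ J * v.
Proof.
elim: J => [|J IHJ]; first by rewrite addn0.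
have := leq_mul IHJ (leqnn (v + 1)); rewrite !expnS; nia.
Qed.

Lemma pigeonhole_close (t : nat -> nat) Z m K : 0 < Z ->
  (forall j, j <= m * K.+1 -> Z <= t j < m.+1 * Z) ->
  exists i j, i < j <= m * K.+1 /\ K * maxn (t i) (t j) <= K.+1 * minn (t i) (t j).
Proof.
move=> Z_gt0 t_range; pose box j := t j * K.+1 %/ Z.
have box_range j : j <= m * K.+1 -> box j \in iota K.+1 (m * K.+1).
  move=> le_j; have := t_range j le_j; rewrite mem_iota /box leq_divRL // ltn_divLR //.
  nia.
have : ~~ uniq (map box (iota 0 (m * K.+1).+1)).
  apply/negP => /uniq_leq_size le_size.
  have /le_size : {subset map box (iota 0 (m * K.+1).+1) <= iota K.+1 (m * K.+1)}.
    by move=> y /mapP[j]; rewrite mem_iota => /andP[_ lt_j] ->; apply: box_range.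
  by rewrite size_map !size_iota ltnn.
case/(uniqPn 0) => i [j [lt_ij]]; rewrite size_map size_iota => lt_j.
rewrite !(nth_map 0) ?size_iota ?(ltn_trans lt_ij) // !nth_iota ?(ltn_trans lt_ij) //.
rewrite !add0n /box => same_box; exists i, j; split; first lia.
have := t_range i (ltnW (leq_trans lt_ij lt_j)); have := t_range j lt_j.
have := divn_eq (t i * K.+1) Z; have := divn_eq (t j * K.+1) Z.
have := ltn_pmod (t i * K.+1) Z_gt0; have := ltn_pmod (t j * K.+1) Z_gt0.
rewrite same_box; nia.
Qed.

Lemma trunc_log_normalize s y M : 1 < s -> 0 < y -> y <= s ^ M ->
  s ^ M <= y * s ^ (M - trunc_log s y) < s ^ M.+1.
Proof.
move=> s_gt1 y_gt0 le_yM; set l := trunc_log s y.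
have le_lM : l <= M.
  by rewrite -(leq_exp2l _ _ s_gt1); apply: leq_trans le_yM; apply: trunc_logP.
have -> : s ^ M = s ^ l * s ^ (M - l) by rewrite -expnD subnKC.
have -> : s ^ M.+1 = s ^ l.+1 * s ^ (M - l) by rewrite -expnD addSn subnKC.
by rewrite leq_mul2r ltn_mul2r trunc_logP ?trunc_log_ltn // expn_gt0 (ltnW s_gt1) !orbT.
Qed.

Definition ps_smooth (p s h : nat) : Prop := exists c d, h = p ^ c * s ^ d.

Definition smooth_block (p s h n : nat) : Prop :=
  h <= n /\ forall h', ps_smooth p s h' -> h < h' -> n < h'.

Section SmoothNumbers.

Variables p s : nat.
Hypotheses (p_gt1 : 1 < p) (s_gt1 : 1 < s).
Local Notation smooth := (ps_smooth p s).
Local Notation block := (smooth_block p s).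

Lemma smooth1 : smooth 1. Proof. by exists 0, 0. Qed.

Lemma smooth_p : smooth p. Proof. by exists 1, 0; rewrite muln1. Qed.

Lemma smoothM h h' : smooth h -> smooth h' -> smooth (h * h').
Proof.
by move=> [c [d ->]] [c' [d' ->]]; exists (c + c'), (d + d'); rewrite !expnD mulnACA.
Qed.

Lemma smoothX h e : smooth h -> smooth (h ^ e).
Proof.
move=> smooth_h; elim: e => [|e IHe]; first exact: smooth1.
by rewrite expnS; apply: smoothM.
Qed.

Lemma smooth_gt0 h : smooth h -> 0 < h.
Proof. by move=> [c [d ->]]; rewrite muln_gt0 !expn_gt0 (ltnW p_gt1) (ltnW s_gt1). Qed.

Lemma exists_smooth_block n : 0 < n -> exists2 h, smooth h & block h n.
Proof.
elim: n => [//|n IHn _]; case: n IHn => [_|n IHn].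
  by exists 1; [exact: smooth1 | split].
have [h smooth_h [le_hn next_h]] := IHn isT.
case: (classic (smooth n.+2)) => [smooth_n2 | not_smooth_n2]; first by exists n.+2.
exists h => //; split => [|h' smooth_h' /(next_h h' smooth_h')]; first exact: leqW.
by rewrite leq_eqVlt => /orP[/eqP eq_h' | //]; rewrite eq_h' in not_smooth_n2.
Qed.

Lemma smooth_gaps_of_pair u v K : smooth u -> smooth v -> v < u -> K * u <= K.+1 * v ->
  exists X0, forall x, X0 <= x -> exists h, [/\ smooth h, x < h & K * h <= K.+1 * x].
Proof.
move=> smooth_u smooth_v lt_vu close_uv; have v_gt0 := smooth_gt0 smooth_v.
set J := p.-1 * v.
have p_vJ : p * v ^ J <= u ^ J.
  have J_gt0 : 0 < J by rewrite muln_gt0 v_gt0 andbT -subn1 subn_gt0.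
  have vJ : v + J = p * v by rewrite /J -mulSn prednK // ltnW.
  have := bernoulli_nat v J; rewrite vJ mulnA (mulnC (v ^ J)) leq_pmul2r //.
  by move/leq_trans; apply; rewrite leq_exp2r // addn1.
exists (v ^ J) => x le_vJx.
(* Walk from p^e v^J <= x to p^e u^J > x, replacing one factor v by u at a time. *)
have [e [_ le_ex]] : exists e, [/\ e < x, p ^ e * v ^ J <= x & ~~ (p ^ e.+1 * v ^ J <= x)].
  apply: (exists_crossing (P := fun e => p ^ e * v ^ J <= x)); first by rewrite mul1n.
  rewrite -ltnNge; apply: leq_trans (ltn_expl x p_gt1) _.
  by rewrite leq_pmulr // expn_gt0 v_gt0.
rewrite -ltnNge expnS -mulnA => lt_ex.
have [j [lt_jJ le_jx lt_jx]] : exists j, [/\ j < J, p ^ e * (v ^ (J - j) * u ^ j) <= x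
                                  & ~~ (p ^ e * (v ^ (J - j.+1) * u ^ j.+1) <= x)].
  apply: (exists_crossing (P := fun j => p ^ e * (v ^ (J - j) * u ^ j) <= x)).
    by rewrite subn0 muln1.
  by rewrite -ltnNge subnn mul1n (leq_trans lt_ex) // mulnCA leq_mul2l p_vJ orbT.
exists (p ^ e * (v ^ (J - j.+1) * u ^ j.+1)); split.
- by apply: smoothM; [exact: smoothX smooth_p | apply: smoothM; apply: smoothX].
- by rewrite ltnNge.
- move: le_jx; rewrite -(subnSK lt_jJ) !expnS.
  move: (p ^ e) (v ^ (J - j.+1)) (u ^ j) => a w w' le_jx.
  have := leq_mul (leqnn (a * w * w')) close_uv; nia.
Qed.

Hypothesis coprime_ps : coprime p s.

Lemma smooth_expn_neq i j e e' : i < j -> p ^ i * s ^ e != p ^ j * s ^ e'.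
Proof.
move=> lt_ij; apply/eqP => /eqP; rewrite -(subnKC (ltnW lt_ij)) expnD -mulnA.
rewrite eqn_pmul2l ?expn_gt0 ?(ltnW p_gt1) // => /eqP eq_e.
have /gcdn_idPl : p %| s ^ e by rewrite eq_e dvdn_mulr // dvdn_exp ?subn_gt0 ?dvdnn.
by move: (coprimeXr e coprime_ps); rewrite /coprime => /eqP -> p1; move: p_gt1; rewrite -p1.
Qed.

Lemma smooth_close_pair K :
  exists u v, [/\ smooth u, smooth v, v < u & K * u <= K.+1 * v].
Proof.
set n := s.-1 * K.+1; set M := p * n.
(* Distinct elements of the interval [s^M, s^(M+1)), to which the pigeonhole applies. *)
pose t j := p ^ j * s ^ (M - trunc_log s (p ^ j)).
have t_range j : j <= n -> s ^ M <= t j < s.-1.+1 * s ^ M.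
  move=> le_jn; rewrite prednK ?(ltnW s_gt1) // -expnS.
  apply: trunc_log_normalize; rewrite ?expn_gt0 ?(ltnW p_gt1) //.
  have n_gt0 : 0 < n by rewrite muln_gt0 -subn1 subn_gt0 s_gt1.
  rewrite /M expnM (leq_trans (leq_pexp2l (ltnW p_gt1) le_jn)) //.
  by rewrite leq_exp2r // ltnW // ltn_expl.
have sM_gt0 : 0 < s ^ M by rewrite expn_gt0 ltnW.
have [i [j [/andP[lt_ij le_jn] close_ij]]] := pigeonhole_close sM_gt0 t_range.
have smooth_t k : smooth (t k) by exists k, (M - trunc_log s (p ^ k)).
have neq_ij : t i != t j by apply: smooth_expn_neq.
exists (maxn (t i) (t j)), (minn (t i) (t j)); split => //.
- by rewrite /maxn; case: ifP.
- by rewrite /minn; case: ifP.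
- move: neq_ij; rewrite neq_ltn; lia.
Qed.

Theorem smooth_gaps K :
  exists X0, forall x, X0 <= x -> exists h, [/\ smooth h, x < h & K * h <= K.+1 * x].
Proof.
have [u [v [smooth_u smooth_v lt_vu close_uv]]] := smooth_close_pair K.
exact: smooth_gaps_of_pair smooth_u smooth_v lt_vu close_uv.
Qed.

End SmoothNumbers.

Definition scaling_defect (k a r : nat) (f : nat -> int) : pred nat :=
  fun n => f (k ^ a * n + r) != ((-1) ^+ a * f n)%R.

Definition scaled_window (q K B h : nat) : pred nat :=
  fun n => [&& B <= n, h < q * n.+1 & q * K * n < K.+1 * h].

Lemma count_scaled_window q K B h N : 0 < q -> 0 < K -> 2 * K.+1 <= B ->
  q * K * count (scaled_window q K B h) (iota 0 N) <= 2 * (if h < q * N then h else 0).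
Proof.
move=> q_gt0 K_gt0 le_KB.
have [/hasP[n] | empty] := boolP (has (scaled_window q K B h) (iota 0 N)); last first.
  by move: empty; rewrite has_count -leqNgt leqn0 => /eqP ->; rewrite muln0.
rewrite mem_iota add0n => /andP[_ lt_nN] /and3P[le_Bn lt_hn lt_nh].
have -> : h < q * N by apply: leq_trans lt_hn _; rewrite leq_mul2l lt_nN orbT.
have le_2qK_h : 2 * (q * K) <= h.
  have := leq_mul (leqnn (q * K)) (leq_trans le_KB le_Bn); nia.
have qK_gt0 : 0 < q * K by rewrite muln_gt0 q_gt0.
apply: leq_trans (count_scaled_interval (lo := K * h) (hi := K.+1 * h) qK_gt0 _) _.
  by move=> m _ /and3P[_ lt_hm lt_mh]; rewrite mulnC mulnAC ltn_pmul2r.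
by rewrite -mulnBl subSnn mul1n; lia.
Qed.

Section Scaling.

Variables p s : nat.
Hypotheses (p_gt1 : 1 < p) (s_gt1 : 1 < s) (coprime_ps : coprime p s).
Local Notation smooth := (ps_smooth p s).
Local Notation block := (smooth_block p s).

Variable f : nat -> int.
Hypothesis f_sign : forall c d n, block (p ^ c * s ^ d) n -> f n = ((-1) ^+ (c + d))%R.
Variables a r : nat.
Hypothesis lt_r : r < p ^ a.

Lemma sign_scaled_block h n : smooth h -> block h n ->
  (forall c d, c < a -> p ^ a * h < p ^ c * s ^ d -> p ^ a * n.+1 <= p ^ c * s ^ d) ->
  f (p ^ a * n + r) = ((-1) ^+ a * f n)%R.
Proof.
move=> [x [y ->]] block_n no_small_gap; have [le_hn next_h] := block_n.
have pa_gt0 : 0 < p ^ a by rewrite expn_gt0 ltnW.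
have lt_nr : p ^ a * n + r < p ^ a * n.+1 by rewrite mulnS addnC ltn_add2r.
rewrite (f_sign block_n) -exprD addnA; apply: f_sign; split.
  by rewrite expnD -mulnA (leq_trans _ (leq_addr _ _)) // leq_mul2l le_hn orbT.
move=> _ [c [d ->]]; rewrite expnD -mulnA => lt_h.
have [le_ac | lt_ca] := leqP a c; last exact: leq_trans lt_nr (no_small_gap c d lt_ca lt_h).
rewrite -(subnKC le_ac) expnD -mulnA in lt_h *; apply: leq_trans lt_nr _.
rewrite leq_mul2l next_h ?orbT //; last by rewrite -(ltn_pmul2l pa_gt0).
by exists (c - a), d.
Qed.

Lemma scaling_defect_near_smooth K X0 n :
  (forall x, X0 <= x -> exists h, [/\ smooth h, x < h & K * h <= K.+1 * x]) ->
  p * X0 < n -> scaling_defect p a r f n ->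
  exists c d, [/\ c < a, p ^ c * s ^ d < p ^ a * n.+1 & p ^ a * K * n < K.+1 * (p ^ c * s ^ d)].
Proof.
move=> gaps lt_n defect.
have [h smooth_h block_n] := @exists_smooth_block p s n (leq_ltn_trans (leq0n _) lt_n).
have [le_hn next_h] := block_n.
have [c [d [lt_ca lt_h lt_n1]]] :
    exists c d, [/\ c < a, p ^ a * h < p ^ c * s ^ d & p ^ c * s ^ d < p ^ a * n.+1].
  apply: NNPP => none; move/eqP: defect; apply.
  apply: sign_scaled_block smooth_h block_n _ => c d lt_ca lt_h.
  by rewrite leqNgt; apply/negP => lt_n1; apply: none; exists c, d.
have lt_n_ph : n < p * h.
  apply: next_h; first exact: smoothM (smooth_p _ _) smooth_h.
  by rewrite ltn_Pmull // (smooth_gt0 p_gt1 s_gt1).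
have le_X0h : X0 <= h by rewrite -(leq_pmul2l (ltnW p_gt1)) ltnW // (ltn_trans lt_n lt_n_ph).
have [h' [smooth_h' lt_hh' close_h']] := gaps h le_X0h.
exists c, d; split => //.
have lt_nh' : n < h' by apply: next_h.
apply: (@leq_ltn_trans (p ^ a * (K.+1 * h))); last by rewrite mulnCA ltn_pmul2l.
by rewrite -mulnA leq_mul2l (leq_trans _ close_h') ?orbT // leq_mul2l ltnW ?orbT.
Qed.

Lemma count_scaling_defect K : 0 < K ->
  exists B, forall N, K * count (scaling_defect p a r f) (iota 0 N) <= K * B + 4 * a * N.
Proof.
move=> K_gt0; have [X0 gaps] := smooth_gaps p_gt1 s_gt1 coprime_ps K.
exists (p * X0 + 2 * K.+1) => N; set B := p * X0 + 2 * K.+1.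
set q := p ^ a; set D := q * N; have q_gt0 : 0 < q by rewrite expn_gt0 ltnW.
set S := \sum_(c < a) \sum_(d < D) count (scaled_window q K B (p ^ c * s ^ d)) (iota 0 N).
have cover : count (scaling_defect p a r f) (iota 0 N) <= B + S.
  apply: leq_trans (_ : count (predU (fun n => n < B)
                         (fun n => (B <= n) && scaling_defect p a r f n)) _ <= _).
    by apply: sub_count => n /= ->; rewrite andbT; case: ltnP.
  apply: leq_trans (count_predU_le _ _ _) (leq_add _ _).
    by rewrite -[X in _ <= X]subn0; apply: count_iota_interval => n _ ->.
  rewrite /S pair_big /=; apply: count_union_bound => n.
  rewrite mem_iota add0n => /andP[_ lt_nN] /andP[le_Bn defect].
  have lt_X0n : p * X0 < n by apply: leq_trans le_Bn; rewrite /B; lia.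
  have [c [d [lt_ca lt_h lt_nh]]] := scaling_defect_near_smooth gaps lt_X0n defect.
  have lt_dD : d < D.
    have le_sd : s ^ d <= p ^ c * s ^ d by rewrite leq_pmull // expn_gt0 ltnW.
    have le_nN : q * n.+1 <= D by rewrite leq_mul2l lt_nN orbT.
    have := ltn_expl d s_gt1; lia.
  by exists (Ordinal lt_ca, Ordinal lt_dD); rewrite /scaled_window /= le_Bn lt_h lt_nh.
have windows : q * K * S <= a * (4 * D).
  rewrite big_distrr /=; apply: leq_trans (_ : \sum_(c < a) 4 * D <= _).
    apply: leq_sum => c _.
    rewrite big_distrr /=; apply: leq_trans (_ : \sum_(d < D)
        2 * (if p ^ c * s ^ d < D then p ^ c * s ^ d else 0) <= _).
      by apply: leq_sum => d _; apply: count_scaled_window; rewrite // /B leq_addl.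
    by rewrite -big_distrr /= -[4]/(2 * 2) -mulnA leq_mul2l sum_geometric_below ?orbT.
  by rewrite sum_nat_const card_ord.
have := leq_mul (leqnn (q * K)) cover; rewrite -(leq_pmul2l q_gt0); nia.
Qed.

Theorem scaling_defect_density_zero : upper_density_zero (scaling_defect p a r f).
Proof.
move=> k; have [B le_count] := @count_scaling_defect (8 * a.+1 * k.+1) isT.
exists (2 * k.+1 * B) => N le_BN; have := le_count N.
rewrite -(@leq_pmul2l (8 * a.+1)) //; nia.
Qed.

End Scaling.

Lemma asym_automatic_of_scaling k (f : nat -> int) : 0 < k ->
  (forall a r, r < k ^ a -> upper_density_zero (scaling_defect k a r f)) ->
  asym_automatic k f.
Proof.
move=> k_gt0 scaling.
exists 2, (fun i n => f (k ^ i * n + 0)); split.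
  by move=> i _; exists i, 0; rewrite expn_gt0 k_gt0.
move=> _ [a [r [lt_r ->]]].
have [odd_a | even_a] := boolP (odd a); [exists 1 | exists 0] => //.
  have lt_0k1 : 0 < k ^ 1 by rewrite expn1.
  apply: upper_density_zero_sub (upper_density_zeroU (scaling a r lt_r) (scaling 1 0 lt_0k1)).
  move=> n /=; rewrite /scaling_defect -signr_odd odd_a expr1 !mulN1r.
  by apply: contraR; rewrite negb_or !negbK => /andP[/eqP -> /eqP ->]; rewrite eqxx.
apply: upper_density_zero_sub (scaling a r lt_r) => n /=.
by rewrite /scaling_defect -signr_odd (negbTE even_a) expr0 mul1r expn0 mul1n addn0.
Qed.

Lemma smooth_blockC p s h n : smooth_block p s h n -> smooth_block s p h n.
Proof.
move=> [le_hn next_h]; split => // _ [c [d ->]] lt_h.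
by apply: next_h lt_h; exists d, c; rewrite mulnC.
Qed.

Lemma in_block_of_smooth_block a b n : smooth_block 2 3 (2 ^ a * 3 ^ b) n -> in_block a b n.
Proof. by move=> [le_n next]; split => // x y; apply: next; exists x, y. Qed.

Unset Implicit Arguments.
Local Open Scope ring_scope.

Theorem proposition4p3 (f : nat -> int) :
  f 0%N = 1 ->
  (forall a b n : nat, in_block a b n -> f n = (-1) ^+ (a + b)) ->
  asym_automatic 2 f /\ asym_automatic 3 f.
Proof.
(* The value f 0 plays no role: changing one value does not affect asymptotic equality. *)
move=> _ f_sign.
have sign23 c d n : smooth_block 2 3 (2 ^ c * 3 ^ d) n -> f n = (-1) ^+ (c + d).
  by move/in_block_of_smooth_block; apply: f_sign.
have sign32 c d n : smooth_block 3 2 (3 ^ c * 2 ^ d) n -> f n = (-1) ^+ (c + d).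
  by rewrite mulnC addnC => /smooth_blockC; apply: sign23.
split; apply: asym_automatic_of_scaling => // a r lt_r.
- by apply: (scaling_defect_density_zero _ _ _ sign23).
- by apply: (scaling_defect_density_zero _ _ _ sign32).
Qed.
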